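(* Let $\{X^I\}_{I\in\mathcal{I}}$ satisfy conditions (i)–(v) of the context. Then for every $\varepsilon>0$ there is $M>0$ such that $\mathbb{P}(X^{[0,2^n]}(1)\ge M)\le\varepsilon$ for all $n\in\mathbb{N}$.
   Context: $\mathcal{I}$ is the set of closed bounded intervals of $\mathbb{R}$. For each $I\in\mathcal{I}$, $X^I=(X^I(t))_{t\in I}$ is a real stochastic process. Assume: (i) $\mathbb{E}[\log^+|X^I(t)|]<\infty$ for all $I$, $t\in I$. (ii) $\lim_{s\to t}\mathbb{P}(|X^I(t)-X^I(s)|>\varepsilon)=0$ for all $\varepsilon>0$. (iii) $X^{[a,b]}(a)=X^{[a,b]}(b)=0$. (iv) For $I'=[a,b]\subset I$, conditionally on $(X^I(t))_{t\in I\setminus I'}$, $(X^I(s))_{s\in I'}$ has the law of $L(s)+\tilde X^{I'}(s)$, where $L$ is the linear interpolation between $X^I(a)$ and $X^I(b)$ and $\tilde X^{I'}$ is an independent copy of $X^{I'}$. (v) For $a\in\mathbb{R}$, $c>0$: $(X^{I-a}(t-a))_{t\in I}\overset{(d)}{=}(X^I(t))_{t\in I}$ and $(c^{-1/2}X^{cI}(ct))_{t\in I}\overset{(d)}{=}(X^I(t))_{t\in I}$. *)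

From HB Require Import structures.
From mathcomp Require Import all_boot all_order all_algebra.
From mathcomp Require Import all_classical all_reals all_analysis.
Set Implicit Arguments. Unset Strict Implicit. Unset Printing Implicit Defensive.
Import Order.TTheory GRing.Theory Num.Theory.
Import numFieldNormedType.Exports.
Local Open Scope classical_set_scope.
Local Open Scope ring_scope.

(* A family of processes indexed by closed bounded intervals [c,d] (c <= d):
   [X c d t w] is X^{[c,d]}(t)(w); only values with c <= t <= d matter. *)
Section Defs.
Context {dT : measure_display} {T : measurableType dT} {R : realType}.
Implicit Types (P : probability T R) (X : R -> R -> R -> T -> R).

Definition logp (x : R) : R := if x <= 1 then 0 else ln x.

Definition linterp (a b x y s : R) : R := x + (y - x) * ((s - a) / (b - a)).

Definition fdd_event (Y : R -> T -> R) (k : nat) (ts : 'I_k -> R)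
  (As : 'I_k -> set R) : set T := [set w | forall j, As j (Y (ts j) w)].

Definition meas_family X := forall c d t, c <= d -> c <= t <= d ->
  measurable_fun setT (X c d t).

Definition cond_i P X := forall c d t, c <= d -> c <= t <= d ->
  (\int[P]_w (logp `|X c d t w|)%:E < +oo)%E.

Definition cond_ii P X := forall c d t, c <= d -> c <= t <= d ->
  forall eps e : R, 0 < eps -> 0 < e -> exists2 delta : R, 0 < delta &
    forall s, c <= s <= d -> `|s - t| < delta ->
      (P [set w | (eps < `|X c d t w - X c d s w|)%R] <= e%:E)%E.

Definition cond_iii X := forall c d, c <= d ->
  (forall w, X c d c w = 0) /\ (forall w, X c d d w = 0).

(* (iv) spatial Markov property, stated on finite-dimensional rectangles:
   for times ts outside [a,b] (in [c,d]) and ss in [a,b], the joint law of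
   ((X(ts), X(a), X(b)), X(ss)) is that of ((X(ts),X(a),X(b)), L(ss)+X~(ss))
   with X~ an independent copy of X^{[a,b]}. *)
Definition cond_iv P X := forall c d a b, c <= a -> a <= b -> b <= d ->
  forall (k : nat) (ts : 'I_k -> R) (As : 'I_k -> set R) (A1 A2 : set R)
         (m : nat) (ss : 'I_m -> R) (Bs : 'I_m -> set R),
  (forall j, c <= ts j <= d /\ (ts j < a \/ b < ts j)) ->
  (forall i, a <= ss i <= b) ->
  (forall j, measurable (As j)) -> measurable A1 -> measurable A2 ->
  (forall i, measurable (Bs i)) ->
  let Eout := fdd_event (X c d) ts As `&` [set w | A1 (X c d a w)]
              `&` [set w | A2 (X c d b w)] in
  let phi := fun x y : R =>
    P [set w | forall i, Bs i (linterp a b x y (ss i) + X a b (ss i) w)] in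
  P (Eout `&` fdd_event (X c d) ss Bs)
  = (\int[P]_w ((\1_Eout w)%:E * phi (X c d a w) (X c d b w)))%E.

(* (v) translation and Brownian scaling invariance, in finite-dimensional law *)
Definition cond_v P X :=
  (forall c d h, c <= d -> forall (k : nat) (ts : 'I_k -> R) (As : 'I_k -> set R),
     (forall j, c <= ts j <= d) -> (forall j, measurable (As j)) ->
     P (fdd_event (fun t => X (c - h) (d - h) (t - h)) ts As)
     = P (fdd_event (X c d) ts As)) /\
  (forall c d l, c <= d -> 0 < l -> forall (k : nat) (ts : 'I_k -> R) (As : 'I_k -> set R),
     (forall j, c <= ts j <= d) -> (forall j, measurable (As j)) ->
     P (fdd_event (fun t w => (Num.sqrt l)^-1 * X (l * c) (l * d) (l * t) w) ts As)
     = P (fdd_event (X c d) ts As)).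

End Defs.

From HB Require Import structures.
From mathcomp Require Import all_boot all_order all_algebra.
From mathcomp Require Import all_classical all_reals all_analysis.
From mathcomp Require Import lra measurable_realfun.
Import Order.TTheory GRing.Theory Num.Theory.
Local Open Scope classical_set_scope.
Local Open Scope ring_scope.

(* On the event that |X^[0,2^(n+1)](2^n)| is small, the spatial Markov property at [0,2^n]
   writes X^[0,2^(n+1)](1) as X^[0,2^(n+1)](2^n) / 2^n plus an independent copy of
   X^[0,2^n](1); hence
     P(|X^[0,2^(n+1)](1)| > m + t) <= P(|X^[0,2^n](1)| > m) + P(|X^[0,2^(n+1)](2^n)| >= 2^n t),
   and by Brownian scaling the last term is P(|Y| >= 2^(n/2) t) with Y = X^[0,2](1).
   Iterating with t_k = c q^k, q = r / sqrt 2 and 1 < r < sqrt 2, the levels t_k have sum at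
   most c / (1 - q) while the error terms are P(|Y| >= c r^k).  A finite log-moment makes
   sum_j P(|Y| >= r^j) finite, so for c = r^K with K large all these error sums are small. *)

Section measurable_comparison_sets.
Context {dT : measure_display} {T : measurableType dT} {R : realType}.
Implicit Types (f g : T -> R) (a : R).

Lemma measurable_ler_set f g : measurable_fun setT f -> measurable_fun setT g ->
  measurable [set x | f x <= g x].
Proof. by move=> mf mg; rewrite -[X in measurable X]setTI; exact: measurable_fun_le. Qed.

Lemma measurable_ltr_set f g : measurable_fun setT f -> measurable_fun setT g ->
  measurable [set x | f x < g x].
Proof.
move=> mf mg; rewrite -[X in measurable X]setTI.
exact: (measurable_fun_ltr mf mg measurableT (Y := [set true])).
Qed.

Lemma measurable_lt_norm a f : measurable_fun setT f -> measurable [set x | a < `|f x|].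
Proof. by move=> mf; apply: measurable_ltr_set => //; exact: measurableT_comp mf. Qed.

Lemma measurable_le_norm a f : measurable_fun setT f -> measurable [set x | a <= `|f x|].
Proof. by move=> mf; apply: measurable_ler_set => //; exact: measurableT_comp mf. Qed.

End measurable_comparison_sets.

Lemma set_forall_ord1 (U : Type) (A : set U) : [set x | 'I_1 -> A x] = A.
Proof. by apply/seteqP; split => x /=; [apply; exact: ord0 | move=> ? _]. Qed.

Lemma fdd_event_ord0 dT (T : measurableType dT) (R : realType) (Y : R -> T -> R)
    (ts : 'I_0 -> R) (As : 'I_0 -> set R) :
  fdd_event Y ts As = setT.
Proof. by apply/seteqP; split => // w _ []. Qed.

(* The integrand produced by [cond_iv] is not known to be measurable. *)
Lemma ge0_le_integral_nonmeasurable dT (T : measurableType dT) (R : realType)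
    (mu : {measure set T -> \bar R}) (f g : T -> \bar R) :
  (forall x, (0 <= f x)%E) -> (forall x, (f x <= g x)%E) ->
  (\int[mu]_x f x <= \int[mu]_x g x)%E.
Proof.
move=> f0 fg; have g0 x : (0 <= g x)%E by exact: le_trans (f0 x) (fg x).
rewrite !ge0_integralTE //; apply: le_ereal_sup => _ [h hf <-].
by exists h => //= x; exact: le_trans (hf x) (fg x).
Qed.

Lemma sqrtrX (R : rcfType) (a : R) n : 0 <= a -> Num.sqrt (a ^+ n) = Num.sqrt a ^+ n.
Proof.
move=> a0; elim: n => [|n IH]; first by rewrite !expr0 sqrtr1.
by rewrite !exprS sqrtrM // IH.
Qed.

Lemma sum_geometric_le (R : realType) (c q : R) n : 0 <= c -> 0 < q < 1 ->
  \sum_(k < n) c * q ^+ k <= c / (1 - q).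
Proof.
move=> c_ge0 /andP[q_gt0 q_lt1].
rewrite (_ : \sum_(k < n) _ = series (geometric c q) n).
  by apply: geometric_le_lim; rewrite ?gtr0_norm.
by rewrite seriesEnat /= big_mkord.
Qed.

Lemma bounded_partial_sums_tail (R : realType) (s : nat -> R) (B eps : R) :
  (forall N, \sum_(j < N) s j <= B) -> 0 < eps ->
  exists K, forall n, \sum_(j < n) s (K + j)%N <= eps.
Proof.
move=> sB eps_gt0.
pose S := [set x | exists N, x = \sum_(j < N) s j].
have supS : has_sup S.
  by split; [exists 0, 0%N; rewrite big_ord0 | exists B => _ [N ->]].
have [_ [K ->] ltK] := sup_adherent eps_gt0 supS.
exists K => n; have := sup_upper_bound supS (ex_intro _ (K + n)%N erefl).
rewrite big_split_ord /=; lra.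
Qed.

Section logp.
Variable R : realType.
Implicit Types x y r : R.

Lemma logp_ge0 x : 0 <= logp x.
Proof. by rewrite /logp; case: ifPn => // /negbTE; rewrite leNgt => /negbFE/ln_gt0/ltW. Qed.

Lemma ln_le_logp x : ln x <= logp x.
Proof. by rewrite /logp; case: ifPn => // /ln_le0. Qed.

Lemma measurable_logp : measurable_fun setT (@logp R).
Proof.
have -> : @logp R = @ln R \o (fun x => Num.max x 1).
  apply/funext => x /=; rewrite /logp; case: ifPn => x1.
    by rewrite max_r // ln1.
  by rewrite max_l // ltW // ltNge.
by apply: measurableT_comp; [exact: measurable_ln | exact: measurable_maxr].
Qed.

Lemma sum_indic_expr_le_logp r y N : 1 < r ->
  \sum_(j < N) ((r ^+ j <= y)%R%:R : R) <= 1 + logp y / ln r.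
Proof.
move=> r1; have r_gt0 : 0 < r by exact: lt_trans r1.
have lnr_gt0 : 0 < ln r by exact: ln_gt0.
have logp_div_ge0 : 0 <= logp y / ln r by rewrite divr_ge0 ?logp_ge0 ?ltW.
elim: N => [|N IH]; first by rewrite big_ord0; lra.
rewrite big_ord_recr /=; case: (boolP (r ^+ N <= y)) => [rNy|_]; last by rewrite addr0.
have sumN : \sum_(j < N) ((r ^+ j <= y)%R%:R : R) <= N%:R.
  rewrite -[N in N%:R]card_ord -sumr_const.
  by apply: ler_sum => j _; rewrite lern1 leq_b1.
have N_le : N%:R <= logp y / ln r.
  have y_gt0 : 0 < y by apply: lt_le_trans rNy; rewrite exprn_gt0.
  rewrite ler_pdivlMr // mulr_natl -lnXn //.
  by apply: le_trans (ln_le_logp y); rewrite ler_ln // posrE exprn_gt0.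
by rewrite -[true%:R]/(1 : R); lra.
Qed.

End logp.

Section log_moment.
Context {dT : measure_display} {T : measurableType dT} {R : realType} (P : probability T R).
Variables (Y : T -> R) (r : R).
Hypotheses (mY : measurable_fun setT Y) (r1 : 1 < r).

Let lnr_gt0 : 0 < ln r. Proof. exact: ln_gt0. Qed.

Lemma sum_prob_expr_le_norm N :
  (\sum_(j < N) P [set w | (r ^+ j <= `|Y w|)%R] <=
   1 + (ln r)^-1%:E * \int[P]_w (logp `|Y w|)%:E)%E.
Proof.
have mA j : measurable [set w | r ^+ j <= `|Y w|] by exact: measurable_le_norm.
have mlogY : measurable_fun setT (fun w => (logp `|Y w|)%:E).
  apply/measurable_EFinP; apply: (measurableT_comp (measurable_logp R)).
  exact: measurableT_comp mY.
under eq_bigr => j _ do rewrite -[X in P X]setIT -integral_indic //.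
rewrite -ge0_integral_sum //; last first.
  by move=> j; apply/measurable_EFinP; exact: measurable_indic.
apply: le_trans (@ge0_le_integral_nonmeasurable _ _ _ P _
  (fun w => (1 + (ln r)^-1 * logp `|Y w|)%:E) _ _) _.
- by move=> w; apply: sume_ge0 => j _; rewrite lee_fin.
- move=> w; rewrite sumEFin lee_fin mulrC.
  apply: le_trans _ (sum_indic_expr_le_logp _ _ _ N r1).
  by apply: ler_sum => j _; rewrite indicE /in_mem /= /in_set asboolb.
under eq_integral do rewrite EFinD EFinM.
rewrite ge0_integralD //; first last.
- exact: measurable_funeM.
- by move=> w _; rewrite lee_fin mulr_ge0 ?logp_ge0 // invr_ge0 ltW.
rewrite ge0_integralZl_EFin //; last 2 first.
- by move=> w _; rewrite lee_fin logp_ge0.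
- by rewrite invr_ge0 ltW.
rewrite integral_cst // [X in (1 * X)%E](_ : _ = 1%E) ?mul1e //; exact: probability_setT.
Qed.

Lemma log_moment_tail eps : 0 < eps ->
  (\int[P]_w (logp `|Y w|)%:E < +oo)%E ->
  exists2 c : R, 0 < c &
    forall n, (\sum_(k < n) P [set w | (c * r ^+ k <= `|Y w|)%R] <= eps%:E)%E.
Proof.
move=> eps_gt0 logY_fin.
pose s j := fine (P [set w | r ^+ j <= `|Y w|]).
have Ps j : P [set w | r ^+ j <= `|Y w|] = (s j)%:E.
  by rewrite fineK // fin_num_measure //; exact: measurable_le_norm.
pose L := (\int[P]_w (logp `|Y w|)%:E)%E.
have L_fin : L \is a fin_num.
  by rewrite ge0_fin_numE // integral_ge0 // => w _; rewrite lee_fin logp_ge0.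
have [K tail] : exists K, forall n, \sum_(j < n) s (K + j)%N <= eps.
  apply: (@bounded_partial_sums_tail _ _ (1 + (ln r)^-1 * fine L)) => // N.
  rewrite -lee_fin -sumEFin EFinD EFinM fineK //.
  under eq_bigr do rewrite -Ps; exact: sum_prob_expr_le_norm.
exists (r ^+ K); first by rewrite exprn_gt0 // (lt_trans ltr01).
move=> n; under eq_bigr do rewrite -exprD Ps.
by rewrite sumEFin lee_fin.
Qed.

End log_moment.

Section dyadic_recursion.
Context {dT : measure_display} {T : measurableType dT} {R : realType} (P : probability T R).
Variable X : R -> R -> R -> T -> R.
Hypotheses (mX : meas_family X) (X_pinned : cond_iii X)
  (X_markov : cond_iv P X) (X_scaling : cond_v P X).

Lemma markov_small_endpoint_le (b d M t : R) : 1 <= b -> b <= d ->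
  (P ([set w | (`|X 0 d b w| < b * t)%R] `&` [set w | (M + t < `|X 0 d 1 w|)%R])
   <= P [set w | (M < `|X 0 b 1 w|)%R])%E.
Proof.
move=> b1 bd; have b_gt0 : 0 < b by exact: lt_le_trans b1.
have d0 : 0 <= d by exact: le_trans (ltW b_gt0) bd.
have mXb1 : measurable_fun setT (X 0 b 1).
  by apply: (mX 0 b 1); [exact: ltW | rewrite ler01].
have mG := measurable_lt_norm M _ mXb1.
have := X_markov 0 d 0 b (le_refl 0) (ltW b_gt0) bd 0 (fun _ => 0) (fun _ => setT) setT
  [set y | `|y| < b * t] 1 (fun _ => 1) (fun _ => [set z | M + t < `|z|]).
move=> /(_ (fun j => ltac:(by case: j))).
move=> /(_ (fun _ => ltac:(by rewrite ler01 b1)) (fun _ => measurableT) measurableT).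
have mball : measurable [set y : R | `|y| < b * t] by exact: measurable_ltr_set.
move=> /(_ mball (fun _ => measurable_lt_norm _ _ (@measurable_id _ _ setT))) /=.
rewrite fdd_event_ord0 /fdd_event !set_forall_ord1 !setTI => ->.
apply: le_trans (@ge0_le_integral_nonmeasurable _ _ _ P _
  (cst (P [set w | (M < `|X 0 b 1 w|)%R])) _ _) _.
- by move=> w; rewrite mule_ge0 // lee_fin.
- move=> w; rewrite indicE; case: (boolP (w \in _)) => [/set_mem Xb_small|_]; last first.
    by rewrite mul0e.
  rewrite mul1e /= (X_pinned 0 d d0).1 /linterp !subr0 add0r mul1r set_forall_ord1.
  apply: le_measure; rewrite ?inE //.
    by apply: measurable_lt_norm; apply: measurable_funD.
  move=> w' /= lt_norm; have : `|X 0 d b w / b| < t.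
    by rewrite normrM normfV (gtr0_norm b_gt0) ltr_pdivrMr // mulrC.
  have := ler_normD (X 0 d b w / b) (X 0 b 1 w'); lra.
by rewrite integral_cst // [X in (_ * X)%E](_ : _ = 1%E) ?mule1 //; exact: probability_setT.
Qed.

Lemma markov_step (b d M t : R) : 1 <= b -> b <= d ->
  (P [set w | (M + t < `|X 0 d 1 w|)%R] <=
   P [set w | (M < `|X 0 b 1 w|)%R] + P [set w | (b * t <= `|X 0 d b w|)%R])%E.
Proof.
move=> b1 bd; have b_gt0 : 0 < b by exact: lt_le_trans b1.
have d0 : 0 <= d by exact: le_trans (ltW b_gt0) bd.
have mXd1 : measurable_fun setT (X 0 d 1).
  by apply: (mX 0 d 1) => //; rewrite ler01 (le_trans b1).
have mXdb : measurable_fun setT (X 0 d b) by apply: (mX 0 d b) => //; rewrite ltW.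
have mS : measurable [set w | (`|X 0 d b w| < b * t)%R].
  by apply: measurable_ltr_set => //; exact: measurableT_comp mXdb.
have mL := measurable_lt_norm (M + t) _ mXd1.
have mB := measurable_le_norm (b * t) _ mXdb.
apply: le_trans (le_measure _ _ _ (_ : _ `<=` (_ `&` _) `|` _))
  (le_trans (measureU2 _ (measurableI _ _ mS mL) mB) _).
- by rewrite inE.
- by rewrite inE; exact: measurableU (measurableI _ _ _ _) mB.
- by move=> w Lw; case: (ltP `|X 0 d b w| (b * t)); [left | right].
by apply: leeD => //; exact: markov_small_endpoint_le.
Qed.

Lemma scaling_norm_ge (l s : R) : 0 < l ->
  P [set w | (Num.sqrt l * s <= `|X 0 (l * 2) l w|)%R] =
  P [set w | (s <= `|X 0 2 1 w|)%R].
Proof.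
move=> l_gt0; have sqrtl_gt0 : 0 < Num.sqrt l by rewrite sqrtr_gt0.
have := X_scaling.2 0 2 l (ler0n _ 2) l_gt0 1 (fun _ => 1) (fun _ => [set z | s <= `|z|]).
move=> /(_ (fun _ => ltac:(by rewrite ler01 ler1n))).
move=> /(_ (fun _ => measurable_le_norm _ _ (@measurable_id _ _ setT))).
rewrite /fdd_event !set_forall_ord1 mulr0 mulr1 => <-.
congr (P _); apply/funext => w /=.
by rewrite normrM normfV (gtr0_norm sqrtl_gt0) (mulrC _^-1) ler_pdivlMr // mulrC.
Qed.

Lemma dyadic_sum_bound (t : nat -> R) n :
  (P [set w | (\sum_(k < n) t k < `|X 0 (2 ^+ n) 1 w|)%R] <=
   \sum_(k < n) P [set w | (Num.sqrt (2 ^+ k) * t k <= `|X 0 2 1 w|)%R])%E.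
Proof.
elim: n => [|n IH].
  rewrite !big_ord0 expr0 (_ : [set w | _] = set0) ?measure0 //.
  by apply/seteqP; split => w //=; rewrite (X_pinned 0 1 ler01).2 normr0 ltxx.
have one_le_2n : 1 <= (2 : R) ^+ n by rewrite exprn_ege1 // ler1n.
have le_2n : (2 : R) ^+ n <= 2 ^+ n.+1.
  by rewrite exprS ler_peMl ?exprn_ge0 // ler1n.
rewrite !big_ord_recr /=; apply: le_trans (markov_step _ _ _ (t n) one_le_2n le_2n) _.
apply: leeD => //.
rewrite exprSr -(scaling_norm_ge _ _ (lt_le_trans ltr01 one_le_2n)).
by rewrite mulrA -expr2 sqr_sqrtr // (le_trans ler01).
Qed.

Lemma dyadic_geometric_bound (c r : R) : 0 < c -> 0 < r -> r ^+ 2 < 2 ->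
  exists2 M : R, 0 < M & forall n,
    (P [set w | (M <= X 0 (2 ^+ n) 1 w)%R] <=
     \sum_(k < n) P [set w | (c * r ^+ k <= `|X 0 2 1 w|)%R])%E.
Proof.
move=> c_gt0 r_gt0 r2_lt2; pose q := r / Num.sqrt 2.
have sqrt2_gt0 : 0 < Num.sqrt (2 : R) by rewrite sqrtr_gt0.
have q_gt0 : 0 < q by rewrite divr_gt0.
have q_lt1 : q < 1.
  by rewrite ltr_pdivrMr // mul1r -[r]gtr0_norm // -sqrtr_sqr ltr_sqrt.
have sqrt2q : Num.sqrt 2 * q = r by rewrite mulrC divfK ?gt_eqF.
exists (c / (1 - q) + 1) => [|n].
  by apply: ltr_wpDl => //; apply/ltW/divr_gt0; rewrite ?subr_gt0.
have mXn : measurable_fun setT (X 0 (2 ^+ n) 1).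
  by apply: (mX 0 (2 ^+ n) 1); rewrite ?exprn_ge0 // ler01 exprn_ege1 // ler1n.
have sum_le : \sum_(k < n) c * q ^+ k <= c / (1 - q).
  by apply: sum_geometric_le; rewrite ?q_gt0 ?q_lt1 // ltW.
apply: le_trans (le_measure _ _ _ (_ : _ `<=`
    [set w | (\sum_(k < n) c * q ^+ k < `|X 0 (2 ^+ n) 1 w|)%R]))
  (le_trans (dyadic_sum_bound (fun k => c * q ^+ k) n) _).
- by rewrite inE; apply: measurable_ler_set.
- by rewrite inE; exact: measurable_lt_norm.
- by move=> w /= le_X; have := ler_norm (X 0 (2 ^+ n) 1 w); lra.
by under eq_bigr => k _ do rewrite sqrtrX // mulrCA -exprMn sqrt2q.
Qed.

End dyadic_recursion.

Theorem lemma5p1 (dT : measure_display) (T : measurableType dT) (R : realType)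
  (P : probability T R) (X : R -> R -> R -> T -> R) :
  meas_family X -> cond_i P X -> cond_ii P X -> cond_iii X -> cond_iv P X ->
  cond_v P X ->
  forall eps : R, 0 < eps -> exists2 M : R, 0 < M &
    forall n : nat, (P [set w | (M <= X 0 (2 ^+ n) 1 w)%R] <= eps%:E)%E.
Proof.
move=> mX X_log _ X_pinned X_markov X_scaling eps eps_gt0.
have X021 : 0 <= (1 : R) <= 2 by rewrite ler01 ler1n.
have [c c_gt0 tail_le] := log_moment_tail P (X 0 2 1) (5 / 4)
  (mX 0 2 1 (ler0n _ 2) X021) ltac:(lra) eps eps_gt0 (X_log 0 2 1 (ler0n _ 2) X021).
have [M M_gt0 dyadic_le] := dyadic_geometric_bound P X mX X_pinned X_markov X_scaling
  c (5 / 4) c_gt0 ltac:(lra) ltac:(rewrite expr2; lra).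
by exists M => // n; apply: le_trans (dyadic_le n) (tail_le n).
Qed.
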